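(* Let $q\ge 3$ be a prime power and $1\le d\le e$. For all $0\le i\le d-1$ and $1\le j\le d$, $$|B_j(i)|>|B_j(i+1)|.$$
   Context: For integers $m\ge 0$ and $l$, ${m\brack l}=\prod_{t=1}^{l}\frac{q^{m-t+1}-1}{q^t-1}$ for $l\ge0$ and $0$ for $l<0$. For $0\le i,j\le d$, $$B_j(i)=\sum_{h=0}^{\min\{j,d-i\}}(-1)^{j-h}q^{eh+\binom{j-h}{2}}{d-h\brack d-j}{d-i\brack h};$$ these are the eigenvalues of the bilinear forms graph $H_q(d,e,j)$ (vertices: $d\times e$ matrices over $\mathbb F_q$, adjacent iff their difference has rank $j$). *)

From mathcomp Require Import all_boot all_order all_algebra.
Set Implicit Arguments. Unset Strict Implicit. Unset Printing Implicit Defensive.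
Import Order.TTheory GRing.Theory Num.Theory.
Local Open Scope ring_scope.

(* The exponent m-t+1 is written
   m.+1 - t (equal to m-t+1 whenever t <= m+1; when t > m+1 the product
   already contains the zero factor at t = m+1, so the value is unaffected). *)
Definition gbin (q m l : nat) : rat :=
  \prod_(1 <= t < l.+1) (((q ^ (m.+1 - t))%:R - 1) / ((q ^ t)%:R - 1)).

(* B_j(i) for the bilinear forms graph H_q(d,e,j). *)
Definition B (q d e j i : nat) : rat :=
  \sum_(0 <= h < (minn j (d - i)).+1)
    (-1) ^+ (j - h) * (q ^ (e * h + 'C(j - h, 2)))%:R
      * gbin q (d - h) (d - j) * gbin q (d - i) h.

Definition prime_power (q : nat) : Prop :=
  exists p k : nat, prime p /\ (0 < k)%N /\ q = (p ^ k)%N.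

From mathcomp Require Import all_boot all_order all_algebra.
From mathcomp Require Import ring lra zify.
Set Implicit Arguments. Unset Strict Implicit. Unset Printing Implicit Defensive.
Import Order.TTheory GRing.Theory Num.Theory.
Local Open Scope ring_scope.

(* Write B_j(i) = (-1)^(j-n) * (T(n) - T(n-1) + T(n-2) - ...), n = min(j, d-i),
   where T_i(h) = q^(eh + C(j-h,2)) [d-h, d-j] [d-i, h] >= 0 is the h-th summand
   without its sign.  The proof has three ingredients.
   1. An alternating sum of a nonnegative nondecreasing sequence T lies in
      [T(n) - T(n-1), T(n)]; hence T_i(h) <= T_i(h+1) gives
      T_i(n) - T_i(n-1) <= |B_j(i)| <= T_i(n).
   2. The Gaussian binomials obey two one-step identities (lower and upper
      index), which give exact ratios T_i(h+1) : T_i(h) and T_{i+1}(h) : T_i(h).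
   3. With these ratios, monotonicity in h and the "gap" inequality
      T_{i+1}(n') < T_i(n) - T_i(n-1), n' = min(j, d-i-1), reduce to explicit
      inequalities between powers of Q = q >= 3 (using e >= d); the gap is
      proved separately for j < d-i (then n = n' = j) and j >= d-i (then
      n = d-i, n' = d-i-1).
   Chaining |B_j(i+1)| <= T_{i+1}(n') < T_i(n) - T_i(n-1) <= |B_j(i)| proves the
   theorem. *)

Section AlternatingSums.
Variables (R : realDomainType) (T : nat -> R).

Definition alt_sum (n : nat) : R := \sum_(0 <= h < n.+1) (-1) ^+ (n - h) * T h.

Lemma alt_sumS n : alt_sum n.+1 = T n.+1 - alt_sum n.
Proof.
rewrite /alt_sum big_nat_recr //= subnn expr0 mul1r addrC -sumrN.
congr (_ + _); apply: eq_big_nat => h /andP[_ h_le_n].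
by rewrite subSn // exprS mulN1r mulNr.
Qed.

Lemma alt_sum_bounds n : (forall h, (h <= n)%N -> 0 <= T h) ->
  (forall h, (h < n)%N -> T h <= T h.+1) -> 0 <= alt_sum n <= T n.
Proof.
elim: n => [|n IHn] T_ge0 T_mono.
  by rewrite /alt_sum big_nat1 expr0 mul1r lexx T_ge0.
have /andP[S_ge0 S_le] :=
  IHn (fun h hn => T_ge0 h (leqW hn)) (fun h hn => T_mono h (ltnW hn)).
by rewrite alt_sumS subr_ge0 (le_trans S_le (T_mono n _)) //= lerBlDr lerDl.
Qed.

Lemma alt_sum_ge_gap n : (0 < n)%N -> (forall h, (h <= n)%N -> 0 <= T h) ->
  (forall h, (h < n)%N -> T h <= T h.+1) -> T n - T n.-1 <= alt_sum n.
Proof.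
case: n => // n _ T_ge0 T_mono.
have /andP[_ S_le] :=
  alt_sum_bounds (fun h hn => T_ge0 h (leqW hn)) (fun h hn => T_mono h (ltnW hn)).
by rewrite alt_sumS lerB.
Qed.

End AlternatingSums.

Lemma pow_pred_lb {R : realDomainType} {Q : R} n :
  1 <= Q -> Q ^+ n * (Q - 1) <= Q ^+ n.+1 - 1.
Proof. move=> Q_ge1; have := exprn_ege1 n Q_ge1; rewrite exprS; nra. Qed.

Lemma prod_pred_ub {R : realDomainType} {Q : R} m n :
  1 <= Q -> (Q ^+ m - 1) * (Q ^+ n - 1) < Q ^+ (m + n).
Proof.
move=> Q_ge1; have := exprn_ege1 m Q_ge1; have := exprn_ege1 n Q_ge1.
rewrite exprD; nra.
Qed.

(* For Q >= 3 one has Q <= (Q - 1)^2, whence this lower bound. *)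
Lemma prod_pred_lb {R : realDomainType} {Q : R} a b :
  3 <= Q -> Q ^+ a.+1 <= (Q ^+ a.+1 - 1) * (Q ^+ b.+1 - 1).
Proof.
move=> Q_ge3; have Q_ge1 : 1 <= Q by lra.
have Qa := exprn_ege1 a Q_ge1; have la := pow_pred_lb a Q_ge1.
have lb : Q - 1 <= Q ^+ b.+1 - 1.
  by rewrite lerB // -[leLHS]expr1 ler_weXn2l.
have sq : Q ^+ a * Q <= Q ^+ a * (Q - 1) * (Q - 1).
  by rewrite -mulrA ler_pM2l ?(lt_le_trans ltr01 Qa) //; nra.
rewrite exprSr (le_trans sq) // ler_pM //; nra.
Qed.

(* The power inequality behind T_i(h) <= T_i(h+1) (here h + c + 1 = d <= e). *)
Lemma pow_ineq_mono {R : realDomainType} {Q : R} (a b c h e : nat) :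
  3 <= Q -> (h + c < e)%N ->
  (Q ^+ h.+1 - 1) * Q ^+ a * (Q ^+ c.+1 - 1)
    <= Q ^+ e * (Q ^+ b.+1 - 1) * (Q ^+ a.+1 - 1).
Proof.
move=> Q_ge3 hce; have Q_ge1 : 1 <= Q by lra.
have Qa_gt0 : 0 < Q ^+ a by rewrite exprn_gt0 //; lra.
have Qe_gt0 : 0 < Q ^+ e by rewrite exprn_gt0 //; lra.
have ub := prod_pred_ub h.+1 c.+1 Q_ge1.
have exp_le : Q ^+ (h.+1 + c.+1) <= Q ^+ e.+1 by rewrite ler_weXn2l //; lia.
have lb := prod_pred_lb a b Q_ge3.
apply: (@le_trans _ _ (Q ^+ a * Q ^+ e.+1)).
  have -> : (Q ^+ h.+1 - 1) * Q ^+ a * (Q ^+ c.+1 - 1)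
    = Q ^+ a * ((Q ^+ h.+1 - 1) * (Q ^+ c.+1 - 1)) by ring.
  by rewrite ler_pM2l // (le_trans (ltW ub) exp_le).
have -> : Q ^+ a * Q ^+ e.+1 = Q ^+ e * Q ^+ a.+1 by rewrite !exprS; ring.
have -> : Q ^+ e * (Q ^+ b.+1 - 1) * (Q ^+ a.+1 - 1)
  = Q ^+ e * ((Q ^+ a.+1 - 1) * (Q ^+ b.+1 - 1)) by ring.
by rewrite ler_pM2l.
Qed.

(* The power inequality behind the gap when j < d - i
   (here r = d - j + 1, s = d - i - j). *)
Lemma pow_ineq_interior_gap {R : realDomainType} {Q : R} (r s j e : nat) :
  3 <= Q -> (r + j <= e.+1)%N ->
  (Q ^+ r - 1) * (Q ^+ (s + j) - 1)
    < Q ^+ s * (Q ^+ e * (Q ^+ s.+1 - 1) * (Q - 1)).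
Proof.
move=> Q_ge3 hrj; have Q_ge1 : 1 <= Q by lra.
have Qs_gt0 : 0 < Q ^+ s by rewrite exprn_gt0 //; lra.
have Qe_gt0 : 0 < Q ^+ e by rewrite exprn_gt0 //; lra.
have ub := prod_pred_ub r (s + j) Q_ge1.
have exp_le : Q ^+ (r + (s + j)) <= Q ^+ (s + e.+1) by rewrite ler_weXn2l //; lia.
have lb := prod_pred_lb s 0 Q_ge3; rewrite expr1 in lb.
have Q_le : Q <= Q ^+ s.+1 by rewrite ler_eXnr.
apply: (lt_le_trans ub); apply: (le_trans exp_le).
rewrite exprD ler_pM2l // exprS mulrC -mulrA ler_pM2l //.
exact: le_trans Q_le lb.
Qed.

(* The power inequality behind the gap when d - i <= j
   (here N = d - i - 1, m = j - d + i, i + 1 + N = d <= e). *)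
Lemma pow_ineq_boundary_gap {R : realDomainType} {Q : R} (m i N e : nat) :
  3 <= Q -> (i.+1 + N <= e)%N ->
  Q ^+ m * (Q ^+ i.+1 - 1) * (Q ^+ N.+1 + Q - 2)
    < Q ^+ e * (Q - 1) * (Q ^+ m.+1 - 1).
Proof.
move=> Q_ge3 hiN; have Q_ge1 : 1 <= Q by lra.
have Qm_gt0 : 0 < Q ^+ m by rewrite exprn_gt0 //; lra.
have QN := exprn_ege1 N Q_ge1.
have tail_ub : Q ^+ N.+1 + Q - 2 <= Q ^+ N * ((Q - 1) * (Q - 1)).
  have : 0 <= (Q ^+ N - 1) * (Q * Q - 3 * Q + 1) by rewrite mulr_ge0 //; nra.
  rewrite exprS; nra.
have tail_gt0 : 0 < Q ^+ N.+1 + Q - 2 by have := exprn_ege1 N.+1 Q_ge1; lra.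
have exp_le : Q ^+ (i.+1 + N) <= Q ^+ e by rewrite ler_weXn2l.
have lbm := pow_pred_lb m Q_ge1.
have Qi_gt0 : 0 < Q ^+ i.+1 by rewrite exprn_gt0 //; lra.
have head_ub : (Q ^+ i.+1 - 1) * (Q ^+ N.+1 + Q - 2)
    < Q ^+ i.+1 * (Q ^+ N * ((Q - 1) * (Q - 1))).
  apply: (@lt_le_trans _ _ (Q ^+ i.+1 * (Q ^+ N.+1 + Q - 2))).
    by rewrite ltr_pM2r // ltrBlDr ltrDl.
  by rewrite ler_pM2l.
apply: (@lt_le_trans _ _ (Q ^+ (i.+1 + N) * (Q ^+ m * (Q - 1)) * (Q - 1))).
  have -> : Q ^+ (i.+1 + N) * (Q ^+ m * (Q - 1)) * (Q - 1)
    = Q ^+ m * (Q ^+ i.+1 * (Q ^+ N * ((Q - 1) * (Q - 1)))) by rewrite exprD; ring.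
  by rewrite -mulrA ltr_pM2l.
have -> : Q ^+ e * (Q - 1) * (Q ^+ m.+1 - 1) = Q ^+ e * (Q ^+ m.+1 - 1) * (Q - 1)
  by ring.
rewrite ler_pM2r; last by lra.
apply: ler_pM => //; first by rewrite exprn_ge0 //; lra.
by rewrite mulr_ge0 //; [rewrite exprn_ge0 | ]; lra.
Qed.

Section GaussianBinomials.
Variable q : nat.
Hypothesis q_gt1 : (1 < q)%N.
Local Notation Q := (q%:R : rat).

Lemma gbin0 m : gbin q m 0 = 1.
Proof. by rewrite /gbin big_geq. Qed.

Lemma gbinS m l :
  gbin q m l.+1 = gbin q m l * ((Q ^+ (m - l) - 1) / (Q ^+ l.+1 - 1)).
Proof. by rewrite /gbin big_nat_recr //= subSS !natrX. Qed.

Lemma Qpow_gt1 n : (0 < n)%N -> 1 < Q ^+ n.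
Proof. by move=> n_gt0; rewrite exprn_egt1 ?ltr1n // -lt0n. Qed.

Lemma gbin_lower_step m l :
  gbin q m l.+1 * (Q ^+ l.+1 - 1) = gbin q m l * (Q ^+ (m - l) - 1).
Proof.
by rewrite gbinS -mulrA divfK // subr_eq0 gt_eqF // Qpow_gt1.
Qed.

Lemma gbin_upper_step m l :
  gbin q m.+1 l * (Q ^+ (m.+1 - l) - 1) = gbin q m l * (Q ^+ m.+1 - 1).
Proof.
elim: l => [|l IHl]; first by rewrite !gbin0 subn0.
rewrite !gbinS subSS.
transitivity (gbin q m.+1 l * (Q ^+ (m.+1 - l) - 1) * (Q ^+ (m - l) - 1)
                / (Q ^+ l.+1 - 1)); first by ring.
by rewrite IHl; ring.
Qed.

Lemma gbin_ge0 m l : 0 <= gbin q m l.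
Proof.
elim: l => [|l IHl]; first by rewrite gbin0.
rewrite gbinS mulr_ge0 // divr_ge0 // subr_ge0 exprn_ege1 // ler1n; lia.
Qed.

Lemma gbin_gt0 m l : (l <= m)%N -> 0 < gbin q m l.
Proof.
elim: l => [|l IHl] l_le_m; first by rewrite gbin0.
rewrite gbinS mulr_gt0 ?IHl 1?ltnW // divr_gt0 // subr_gt0 Qpow_gt1 //; lia.
Qed.

End GaussianBinomials.

Section Terms.
Variables q d e j : nat.
Local Notation Q := (q%:R : rat).

Definition term (i h : nat) : rat :=
  (q ^ (e * h + 'C(j - h, 2)))%:R * gbin q (d - h) (d - j) * gbin q (d - i) h.

Lemma B_as_alt_sum i :
  B q d e j i = (-1) ^+ (j - minn j (d - i)) * alt_sum (term i) (minn j (d - i)).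
Proof.
rewrite /B /alt_sum mulr_sumr; apply: eq_big_nat => h /andP[_ h_le].
rewrite /term !mulrA -exprD.
by have -> : (j - minn j (d - i) + (minn j (d - i) - h) = j - h)%N by lia.
Qed.

Hypothesis q_gt1 : (1 < q)%N.
Hypothesis j_le_d : (j <= d)%N.

Lemma term_ge0 i h : 0 <= term i h.
Proof. by rewrite /term !mulr_ge0 // gbin_ge0 //; lia. Qed.

Lemma term_gt0 i h : (h <= j)%N -> (h <= d - i)%N -> 0 < term i h.
Proof.
move=> h_le_j h_le_di.
by rewrite /term !mulr_gt0 ?gbin_gt0 // ?ltr0n ?expn_gt0; lia.
Qed.

Lemma term_ratio_succ_i i h : (h < d - i)%N ->
  term i h * (Q ^+ (d - i - h) - 1) = term i.+1 h * (Q ^+ (d - i) - 1).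
Proof.
move=> h_lt.
have up := gbin_upper_step q (d - i.+1) h.
rewrite (_ : (d - i.+1).+1 = d - i)%N in up; last by lia.
by rewrite /term -!mulrA up.
Qed.

Lemma term_ratio_succ_h i h : (h < j)%N -> (h < d - i)%N ->
  term i h.+1 * ((Q ^+ h.+1 - 1) * Q ^+ (j - h.+1) * (Q ^+ (d - h) - 1))
    = term i h * (Q ^+ e * (Q ^+ (d - i - h) - 1) * (Q ^+ (j - h) - 1)).
Proof.
move=> h_lt_j h_lt_di; rewrite /term.
set a := (j - h.+1)%N; set c := (d - h.+1)%N.
have up := gbin_upper_step q c (d - j).
rewrite (_ : c.+1 - (d - j) = a.+1)%N in up; last by lia.
have low := gbin_lower_step q_gt1 (d - i) h.
have -> : (j - h = a.+1)%N by lia.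
have -> : (d - h = c.+1)%N by lia.
rewrite binS bin1 mulnS.
rewrite (_ : e + e * h + 'C(a, 2) = (e * h + 'C(a, 2)) + e)%N; last by lia.
rewrite addnA !natrX !(exprD _ (e * h + 'C(a, 2))).
set W := _ ^+ (e * h + 'C(a, 2)).
transitivity (W * Q ^+ e * Q ^+ a * (gbin q c (d - j) * (Q ^+ c.+1 - 1))
                * (gbin q (d - i) h.+1 * (Q ^+ h.+1 - 1))); first by ring.
by rewrite -up low; ring.
Qed.

End Terms.

Section Comparisons.
Variables q d e j : nat.
Hypothesis q_ge3 : (2 < q)%N.
Hypothesis j_le_d : (j <= d)%N.
Hypothesis d_le_e : (d <= e)%N.
Local Notation Q := (q%:R : rat).
Local Notation term := (term q d e j).

Let q_gt1 : (1 < q)%N. Proof. exact: ltnW. Qed.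
Let Q_ge3 : 3 <= Q. Proof. by rewrite ler_nat. Qed.

Lemma Qpow_pred_gt0 n : (0 < n)%N -> 0 < Q ^+ n - 1.
Proof. by move=> n_gt0; rewrite subr_gt0 Qpow_gt1. Qed.

Lemma term_mono i h : (h < minn j (d - i))%N -> term i h <= term i h.+1.
Proof.
move=> h_lt.
have h_lt_j : (h < j)%N by lia.
have h_lt_di : (h < d - i)%N by lia.
have ratio := term_ratio_succ_h e q_gt1 j_le_d h_lt_j h_lt_di.
set a := (j - h.+1)%N in ratio; set c := (d - h.+1)%N in ratio.
set b := (d - i - h.+1)%N.
have Ea : (j - h = a.+1)%N by lia.
have Ec : (d - h = c.+1)%N by lia.
have Eb : (d - i - h = b.+1)%N by lia.
rewrite Ea Ec Eb in ratio.
have A_gt0 : 0 < (Q ^+ h.+1 - 1) * Q ^+ a * (Q ^+ c.+1 - 1).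
  by rewrite !mulr_gt0 ?Qpow_pred_gt0 ?exprn_gt0 ?subr_gt0 ?ltr1n ?ltr0n //; lia.
rewrite -(ler_pM2r A_gt0) ratio; apply: ler_wpM2l; first exact: term_ge0.
by apply: pow_ineq_mono => //; lia.
Qed.

Lemma gap_interior i : (0 < j)%N -> (j < d - i)%N ->
  term i.+1 j < term i j - term i j.-1.
Proof.
move=> j_gt0 j_lt_di.
set k := j.-1; have Ej : j = k.+1 by rewrite prednK.
set s := (d - i - j)%N; set r := (d - k)%N.
have t_gt0 : 0 < term i j := term_gt0 e q_gt1 j_le_d (leqnn j) (ltnW j_lt_di).
have ratio_i := term_ratio_succ_i e q_gt1 j_le_d j_lt_di.
have Edi : (d - i = s + j)%N by lia.
rewrite -/s Edi in ratio_i.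
have k_lt_j : (k < j)%N by lia.
have k_lt_di : (k < d - i)%N by lia.
have ratio_h := term_ratio_succ_h e q_gt1 j_le_d k_lt_j k_lt_di.
have Es : (d - i - k = s.+1)%N by lia.
have E1 : (j - k = 1)%N by lia.
rewrite -Ej subnn expr0 mulr1 -/r Es E1 expr1 in ratio_h.
set t1 := term i j in t_gt0 ratio_i ratio_h *.
set t0 := term i k in ratio_h *; set u := term i.+1 j in ratio_i *.
set X := Q ^+ (s + j) - 1 in ratio_i *.
set Y := Q ^+ e * (Q ^+ s.+1 - 1) * (Q - 1) in ratio_h *.
have X_gt0 : 0 < X by rewrite Qpow_pred_gt0 //; lia.
have Y_gt0 : 0 < Y by rewrite !mulr_gt0 ?Qpow_pred_gt0 ?exprn_gt0 ?subr_gt0 ?ltr1n ?ltr0n //; lia.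
rewrite -(ltr_pM2r (mulr_gt0 X_gt0 Y_gt0)).
have -> : u * (X * Y) = t1 * (Q ^+ s - 1) * Y by rewrite ratio_i; ring.
have -> : (t1 - t0) * (X * Y) = t1 * X * Y - t1 * ((Q ^+ j - 1) * (Q ^+ r - 1)) * X.
  by rewrite ratio_h; ring.
rewrite -subr_gt0.
have -> : t1 * X * Y - t1 * ((Q ^+ j - 1) * (Q ^+ r - 1)) * X - t1 * (Q ^+ s - 1) * Y
    = t1 * (Q ^+ j - 1) * (Q ^+ s * Y - (Q ^+ r - 1) * X) by rewrite /X exprD; ring.
apply: mulr_gt0; first by apply: mulr_gt0 => //; rewrite Qpow_pred_gt0.
rewrite subr_gt0 /X /Y.
by apply: pow_ineq_interior_gap => //; lia.
Qed.

Lemma gap_boundary i : (i < d)%N -> (d - i <= j)%N ->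
  term i.+1 (d - i.+1) < term i (d - i) - term i (d - i.+1).
Proof.
move=> i_lt_d di_le_j.
set N := (d - i.+1)%N; have EdiN : (d - i = N.+1)%N by lia.
rewrite EdiN; set m := (j - N.+1)%N.
have N_lt_j : (N < j)%N by lia.
have N_lt_di : (N < d - i)%N by lia.
have t_gt0 : 0 < term i N := term_gt0 e q_gt1 j_le_d (ltnW N_lt_j) (ltnW N_lt_di).
have ratio_i := term_ratio_succ_i e q_gt1 j_le_d N_lt_di.
rewrite EdiN subSnn expr1 in ratio_i.
have ratio_h := term_ratio_succ_h e q_gt1 j_le_d N_lt_j N_lt_di.
have EdN : (d - N = i.+1)%N by lia.
have EjN : (j - N = m.+1)%N by lia.
rewrite -/m EdN EdiN subSnn expr1 EjN in ratio_h.
set t0 := term i N in t_gt0 ratio_i ratio_h *.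
set t1 := term i N.+1 in ratio_h *; set u := term i.+1 N in ratio_i *.
set Z := (Q ^+ N.+1 - 1) * Q ^+ m * (Q ^+ i.+1 - 1) in ratio_h *.
have Z_gt0 : 0 < Z by rewrite !mulr_gt0 ?Qpow_pred_gt0 ?exprn_gt0 ?subr_gt0 ?ltr1n ?ltr0n //; lia.
rewrite -(ltr_pM2r Z_gt0).
have -> : u * Z = t0 * (Q - 1) * (Q ^+ m * (Q ^+ i.+1 - 1)) by rewrite ratio_i /Z; ring.
have -> : (t1 - t0) * Z = t0 * (Q ^+ e * (Q - 1) * (Q ^+ m.+1 - 1)) - t0 * Z.
  by rewrite mulrBl ratio_h.
rewrite -subr_gt0.
have -> : t0 * (Q ^+ e * (Q - 1) * (Q ^+ m.+1 - 1)) - t0 * Z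
          - t0 * (Q - 1) * (Q ^+ m * (Q ^+ i.+1 - 1))
    = t0 * (Q ^+ e * (Q - 1) * (Q ^+ m.+1 - 1)
            - Q ^+ m * (Q ^+ i.+1 - 1) * (Q ^+ N.+1 + Q - 2)) by rewrite /Z; ring.
apply: mulr_gt0 => //; rewrite subr_gt0.
by apply: pow_ineq_boundary_gap => //; lia.
Qed.

Lemma gap_at_min i : (0 < j)%N -> (i < d)%N ->
  term i.+1 (minn j (d - i.+1))
    < term i (minn j (d - i)) - term i (minn j (d - i)).-1.
Proof.
move=> j_gt0 i_lt_d; case: (ltnP j (d - i)) => [j_lt_di | di_le_j].
  have -> : minn j (d - i.+1) = j by lia.
  exact: gap_interior.
have -> : minn j (d - i.+1) = (d - i.+1)%N by lia.
have -> : (d - i).-1 = (d - i.+1)%N by lia.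
exact: gap_boundary.
Qed.

Lemma alt_sum_term_bounds i :
  0 <= alt_sum (term i) (minn j (d - i)) <= term i (minn j (d - i)).
Proof. by apply: alt_sum_bounds => [h _|h]; [apply: term_ge0 | apply: term_mono]. Qed.

Lemma abs_B_alt_sum i : `|B q d e j i| = alt_sum (term i) (minn j (d - i)).
Proof.
rewrite B_as_alt_sum normrM normr_sign mul1r ger0_norm //.
by case/andP: (alt_sum_term_bounds i).
Qed.

Lemma abs_B_le_top i : `|B q d e j i| <= term i (minn j (d - i)).
Proof. by rewrite abs_B_alt_sum; case/andP: (alt_sum_term_bounds i). Qed.

Lemma abs_B_ge_gap i : (0 < j)%N -> (i < d)%N ->
  term i (minn j (d - i)) - term i (minn j (d - i)).-1 <= `|B q d e j i|.
Proof.
move=> j_gt0 i_lt_d; rewrite abs_B_alt_sum.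
apply: alt_sum_ge_gap => [|h _|h]; [lia | by apply: term_ge0 | exact: term_mono].
Qed.

End Comparisons.

Theorem theorem4p3 (q d e : nat) :
  prime_power q -> (3 <= q)%N -> (1 <= d)%N -> (d <= e)%N ->
  forall i j : nat, (i <= d - 1)%N -> (1 <= j)%N -> (j <= d)%N ->
    `|B q d e j i| > `|B q d e j i.+1|.
Proof.
move=> _ q_ge3 d_ge1 d_le_e i j i_le j_gt0 j_le_d.
have i_lt_d : (i < d)%N by lia.
apply: le_lt_trans (abs_B_le_top q_ge3 j_le_d d_le_e i.+1) _.
apply: lt_le_trans (gap_at_min q_ge3 j_le_d d_le_e j_gt0 i_lt_d) _.
exact: abs_B_ge_gap.
Qed.
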